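(* Let $c\in\mathbb{N}$ and $I=\mathbb{N}\times[c]$. Then every $\mathrm{Sym}$-invariant lattice $L\subseteq\mathbb{Z}^{(I)}$ has (i) a finite equivariant universal Gröbner basis, (ii) a finite equivariant Gröbner basis with respect to an arbitrary term order on $\mathbb{Z}_{\ge0}^{(I)}$, (iii) a finite equivariant Markov basis, and (iv) a finite equivariant generating set.
   Context: $\mathbb{N}=\{1,2,\dots\}$. $\mathbb{Z}^{(I)}$ is the free abelian group with basis $I$ (standard basis $\mathbf{e}_{i,j}$), $\mathbb{Z}_{\ge0}^{(I)}$ its nonnegative vectors; a lattice is a subgroup. $\mathrm{Sym}$ is the group of permutations of $\mathbb{N}$ fixing all but finitely many points, acting by linear extension of $\sigma(\mathbf{e}_{i,j})=\mathbf{e}_{\sigma(i),j}$. Term order: additive well-ordering of $\mathbb{Z}_{\ge0}^{(I)}$. For $\mathbf{u}\in\mathbb{Z}_{\ge0}^{(I)}$, $F_L(\mathbf{u})=\{\mathbf{v}\ge\mathbf{0}\mid\mathbf{u}-\mathbf{v}\in L\}$. For $\mathcal{B}\subseteq L$: generating set = generates $L$ as a group; Markov basis = for all $\mathbf{u}$, the graph on $F_L(\mathbf{u})$ with edges $\{\mathbf{v},\mathbf{w}\}$ for $\mathbf{v}-\mathbf{w}\in\pm\mathcal{B}$ is connected; Gröbner basis w.r.t. $\prec$ = for all $\mathbf{u}$ there is a directed path from $\mathbf{u}$ to the $\prec$-minimal element of $F_L(\mathbf{u})$ along edges $\mathbf{v}\to\mathbf{w}$ with $\mathbf{v}-\mathbf{w}\in\pm\mathcal{B}$,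 $\mathbf{w}\prec\mathbf{v}$; universal Gröbner basis = Gröbner basis w.r.t. all term orders. $\mathcal{B}$ is an equivariant X (for each of these notions) if $\mathrm{Sym}(\mathcal{B})=\{\sigma(\mathbf{b})\mid\sigma\in\mathrm{Sym},\mathbf{b}\in\mathcal{B}\}$ is an X. *)

From mathcomp Require Import all_boot all_order all_algebra.
From Stdlib Require Import Relation_Operators.
Set Implicit Arguments. Unset Strict Implicit. Unset Printing Implicit Defensive.
Import Order.TTheory GRing.Theory Num.Theory.
Local Open Scope ring_scope.

(* I = N x [c]; index k : nat stands for the k-th element of N (0-based
   relabelling), j : 'I_c for an element of [c]. *)
Definition vec (c : nat) := nat -> 'I_c -> int.

Definition vzero (c : nat) : vec c := fun _ _ => 0.
Arguments vzero : clear implicits.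
Definition vadd c (u v : vec c) : vec c := fun i j => u i j + v i j.
Definition vsub c (u v : vec c) : vec c := fun i j => u i j - v i j.

Definition finsupp c (v : vec c) : Prop :=
  exists N : nat, forall (i : nat) (j : 'I_c), (N <= i)%N -> v i j = 0.

Definition nonnegvec c (v : vec c) : Prop :=
  finsupp v /\ forall i j, 0 <= v i j.

Definition lattice c (L : vec c -> Prop) : Prop :=
  (forall v, L v -> finsupp v) /\ L (vzero c) /\
  (forall u v, L u -> L v -> L (vsub u v)).

Definition finperm (s : nat -> nat) : Prop :=
  bijective s /\ exists N : nat, forall i, (N <= i)%N -> s i = i.

(* w = s(v), where s(e_{i,j}) = e_{s(i),j} extended linearly *)
Definition act_rel c (s : nat -> nat) (v w : vec c) : Prop :=
  forall i j, w (s i) j = v i j.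

Definition sym_invariant c (L : vec c -> Prop) : Prop :=
  forall s v w, finperm s -> L v -> act_rel s v w -> L w.

Definition SymOrbit c n (B : 'I_n -> vec c) : vec c -> Prop :=
  fun w => exists (s : nat -> nat) (k : 'I_n), finperm s /\ act_rel s (B k) w.

Definition term_order c (prec : vec c -> vec c -> Prop) : Prop :=
  (forall u, nonnegvec u -> ~ prec u u) /\
  (forall u v w, nonnegvec u -> nonnegvec v -> nonnegvec w ->
     prec u v -> prec v w -> prec u w) /\
  (forall u v, nonnegvec u -> nonnegvec v -> prec u v \/ u = v \/ prec v u) /\
  (forall u v w, nonnegvec u -> nonnegvec v -> nonnegvec w ->
     prec u v -> prec (vadd u w) (vadd v w)) /\
  (forall S : vec c -> Prop, (forall v, S v -> nonnegvec v) -> (exists v, S v) ->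
     exists m, S m /\ forall v, S v -> ~ prec v m).

Definition fiber c (L : vec c -> Prop) (u : vec c) : vec c -> Prop :=
  fun v => nonnegvec v /\ L (vsub u v).

Definition edge c (L B : vec c -> Prop) (u : vec c) (v w : vec c) : Prop :=
  fiber L u v /\ fiber L u w /\ (B (vsub v w) \/ B (vsub w v)).

Definition dedge c (L B : vec c -> Prop) prec (u : vec c) (v w : vec c) : Prop :=
  edge L B u v w /\ prec w v.

Inductive gen c (B : vec c -> Prop) : vec c -> Prop :=
| gen0 : gen B (vzero c)
| genB : forall b, B b -> gen B b
| genS : forall x y, gen B x -> gen B y -> gen B (vsub x y).

Definition generating_set c (L B : vec c -> Prop) : Prop :=
  (forall b, B b -> L b) /\ (forall v, L v -> gen B v).

Definition markov_basis c (L B : vec c -> Prop) : Prop :=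
  (forall b, B b -> L b) /\
  forall u, nonnegvec u -> forall v w, fiber L u v -> fiber L u w ->
    clos_refl_trans (vec c) (edge L B u) v w.

Definition groebner_basis c (L B : vec c -> Prop) prec : Prop :=
  (forall b, B b -> L b) /\
  forall u, nonnegvec u -> forall m, fiber L u m ->
    (forall v, fiber L u v -> ~ prec v m) ->
    clos_refl_trans (vec c) (dedge L B prec u) u m.

Definition universal_groebner_basis c (L B : vec c -> Prop) : Prop :=
  forall prec, term_order prec -> groebner_basis L B prec.

From mathcomp Require Import all_boot all_order all_algebra zify.
From Stdlib Require Import Relation_Operators Classical ClassicalEpsilon FunctionalExtensionality.
Set Implicit Arguments. Unset Strict Implicit. Unset Printing Implicit Defensive.
Import GRing.Theory.

(* The Graver basis of L, its conformally minimal nonzero elements, is a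
   universal Groebner basis, a Markov basis and a generating set, because every
   element of L is a conformal sum of Graver elements.  It is a finite union of
   Sym-orbits: read a vector as the word of its columns in Z^c.  The conformal
   order on Z^c is a well-quasi-order, hence by Higman's lemma so is subword
   embedding of such words; an embedding of the columns of g into those of h is
   realised by a finite permutation s with s(g) conformal to h, which forces
   s(g) = h when both are Graver elements.  So an infinite sequence of Graver
   elements in pairwise distinct orbits cannot exist. *)

Lemma dependent_choice_seq T (P : seq T -> T -> Prop) :
  (forall s, exists x, P s x) -> exists f : nat -> T, forall n, P (mkseq f n) (f n).
Proof.
move=> /choice [next nextP].
pose fix prefix n := if n is m.+1 then rcons (prefix m) (next (prefix m)) else [::].
exists (fun n => next (prefix n)) => n.
suff -> : mkseq (fun n => next (prefix n)) n = prefix n by [].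
by elim: n => //= n IH; rewrite mkseqS IH.
Qed.

Lemma ex_minimal_nat (P : nat -> Prop) :
  (exists n, P n) -> exists n, P n /\ forall m, P m -> n <= m.
Proof.
move=> [n Pn]; apply: NNPP => nomin; elim/ltn_ind: n Pn => n IH Pn.
by apply: nomin; exists n; split=> // m Pm; rewrite leqNgt; apply/negP => /IH; apply.
Qed.

Lemma unbounded_subseq (P : nat -> Prop) : (forall N, exists i, N <= i /\ P i) ->
  exists phi : nat -> nat, (forall n, phi n < phi n.+1) /\ forall n, P (phi n).
Proof.
move=> /choice [next nextP].
pose phi n := iter n (fun i => next i.+1) (next 0).
exists phi; split=> [n|]; first by have [] := nextP (phi n).+1.
by case=> [|n]; [have [] := nextP 0 | have [] := nextP (phi n).+1].
Qed.

Definition good T (R : T -> T -> Prop) (f : nat -> T) :=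
  exists i j, i < j /\ R (f i) (f j).
Definition wqo T (R : T -> T -> Prop) := forall f, good R f.

Lemma wqo_chain T (R : T -> T -> Prop) : wqo R -> forall f : nat -> T,
  exists phi : nat -> nat,
    (forall n, phi n < phi n.+1) /\ forall n, R (f (phi n)) (f (phi n.+1)).
Proof.
move=> Rwqo f.
have [N succN] : exists N, forall i, N <= i -> exists2 j, i < j & R (f i) (f j).
  apply: NNPP => noN.
  have [psi [psi_incr psi_dead]] : exists psi : nat -> nat, (forall n, psi n < psi n.+1) /\
      forall n j, psi n < j -> ~ R (f (psi n)) (f j).
    apply: (unbounded_subseq (P := fun i => forall j, i < j -> ~ R (f i) (f j))) => N.
    apply: NNPP => noi; apply: noN; exists N => i Ni; apply: NNPP => nosucc.
    by apply: noi; exists i; split=> // j ij Rij; apply: nosucc; exists j.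
  have [a [b [ab Rab]]] := Rwqo (fun n => f (psi n)).
  exact: psi_dead a (psi b) (homo_ltn ltn_trans psi_incr ab) Rab.
have /choice [next nextP] : forall i, exists j, N <= i -> i < j /\ R (f i) (f j).
  move=> i; case: (leqP N i) => [/succN [j ij Rij]|_]; first by exists j.
  by exists 0.
pose phi n := iter n next N.
have phiN n : N <= phi n.
  elim: n => // n IH; have [lt_next _] := nextP _ IH; exact: leq_trans IH (ltnW lt_next).
by exists phi; split=> n; have [] := nextP _ (phiN n).
Qed.

Lemma wqo_trans_chain T (R : T -> T -> Prop) :
  (forall y x z, R x y -> R y z -> R x z) -> wqo R -> forall f : nat -> T,
  exists phi : nat -> nat,
    (forall n, phi n < phi n.+1) /\ forall a b, a < b -> R (f (phi a)) (f (phi b)).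
Proof.
move=> Rtr Rwqo f; have [phi [phi_incr phiR]] := wqo_chain Rwqo f.
by exists phi; split=> //; apply: homo_ltn.
Qed.

Lemma wqo_leq : wqo leq.
Proof.
move=> f; suff good_from v i : f i = v -> good leq f by apply: (good_from _ 0).
elim/ltn_ind: v i => v IH i fi.
case: (leqP (f i) (f i.+1)) => [le_next|lt_next]; first by exists i, i.+1.
by apply: (IH (f i.+1)) => //; rewrite -fi.
Qed.

Lemma wqo_comap T U (R : U -> U -> Prop) (h : T -> U) :
  wqo R -> wqo (fun x y => R (h x) (h y)).
Proof. by move=> Rwqo f; have [i [j ijR]] := Rwqo (h \o f); exists i, j. Qed.

Lemma sub_wqo T (R R' : T -> T -> Prop) :
  (forall x y, R x y -> R' x y) -> wqo R -> wqo R'.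
Proof. by move=> RR' Rwqo f; have [i [j [ij /RR' ?]]] := Rwqo f; exists i, j. Qed.

Lemma wqo_and T (R1 R2 : T -> T -> Prop) :
  (forall y x z, R1 x y -> R1 y z -> R1 x z) -> wqo R1 -> wqo R2 ->
  wqo (fun x y => R1 x y /\ R2 x y).
Proof.
move=> R1tr R1wqo R2wqo f; have [phi [phi_incr phiR1]] := wqo_trans_chain R1tr R1wqo f.
have [a [b [ab R2ab]]] := R2wqo (f \o phi).
exists (phi a), (phi b); split; first exact: homo_ltn ltn_trans phi_incr _ _ ab.
by split=> //; apply: phiR1.
Qed.

Inductive embeds T (R : T -> T -> Prop) : seq T -> seq T -> Prop :=
| embeds_nil t : embeds R [::] t
| embeds_skip b s t : embeds R s t -> embeds R s (b :: t)
| embeds_cons a b s t : R a b -> embeds R s t -> embeds R (a :: s) (b :: t).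

Lemma minimal_bad_seq T (Q : T -> T -> Prop) (mu : T -> nat) : ~ wqo Q ->
  exists M : nat -> T, ~ good Q M /\ forall n g, ~ good Q g ->
    (forall i, i < n -> g i = M i) -> mu (M n) <= mu (g n).
Proof.
move=> /not_all_ex_not [f0 f0bad].
pose extendable (p : seq T) := exists2 g, ~ good Q g &
  forall i, i < size p -> g i = nth (f0 0) p i.
pose minimal_ext p x := extendable p -> extendable (rcons p x) /\
  forall y, extendable (rcons p y) -> mu x <= mu y.
have [M Mmin] : exists M : nat -> T, forall n, minimal_ext (mkseq M n) (M n).
  apply: dependent_choice_seq => p.
  case: (classic (extendable p)) => [[g gbad gp]|]; last by exists (f0 0).
  have [|k [[x [xk px]] kmin]] :=
    ex_minimal_nat (P := fun k => exists x, mu x = k /\ extendable (rcons p x)).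
    exists (mu (g (size p))), (g (size p)); split=> //; exists g => // i.
    rewrite size_rcons ltnS leq_eqVlt nth_rcons => /orP [/eqP->|ip]; first by rewrite ltnn eqxx.
    by rewrite ip gp.
  exists x => _; split=> // y py; rewrite xk; apply: kmin; by exists y.
have Mext n : extendable (mkseq M n).
  elim: n => [|n IH]; first by exists f0.
  by rewrite mkseqS; exact: (Mmin n IH).1.
have prefixE n i : i < n -> nth (f0 0) (mkseq M n) i = M i by move=> ?; rewrite nth_mkseq.
exists M; split.
  move=> [i [j [ij Mij]]]; have [g gbad gM] := Mext j.+1; apply: gbad; exists i, j.
  by rewrite !gM ?size_mkseq ?prefixE // (ltn_trans ij).
move=> n g gbad gM; apply: (Mmin n (Mext n)).2; exists g => // i.
rewrite size_rcons size_mkseq ltnS leq_eqVlt nth_rcons size_mkseq.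
by case/orP=> [/eqP->|ni]; [rewrite ltnn eqxx | rewrite ni prefixE // gM].
Qed.

Theorem higman T (R : T -> T -> Prop) :
  (forall y x z, R x y -> R y z -> R x z) -> wqo R -> wqo (embeds R).
Proof.
move=> Rtr Rwqo; apply: NNPP => /(minimal_bad_seq size) [M [Mbad Mmin]].
have M_cons n : exists a t, M n = a :: t.
  case En: (M n) => [|a t]; last by exists a, t.
  by case: Mbad; exists n, n.+1; rewrite En; split=> //; apply: embeds_nil.
have /choice [hd /choice [tl M_E]] := M_cons.
have [psi [psi_incr psiR]] := wqo_trans_chain Rtr Rwqo hd.
pose k := psi 0.
pose g i := if i < k then M i else tl (psi (i - k)).
have psi_ge n : k <= psi n.
  exact: (homo_leq leqnn leq_trans (fun n => ltnW (psi_incr n))) 0 n (leq0n n).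
(* The tails of M along the R-chain of its heads, appended to the prefix of M
   before k, form a bad sequence that is shorter than M at k. *)
have gbad : ~ good (embeds R) g.
  move=> [i [j [ij]]]; rewrite /g; case: (ltnP j k) => [jk|kj].
    by rewrite (ltn_trans ij jk) => gij; apply: Mbad; exists i, j.
  case: (ltnP i k) => [ik gij|ki].
    apply: Mbad; exists i, (psi (j - k)); split; first exact: leq_trans ik (psi_ge _).
    by rewrite [M (psi _)]M_E; apply: embeds_skip.
  move=> gij; apply: Mbad; exists (psi (i - k)), (psi (j - k)).
  have ijk : i - k < j - k by rewrite ltn_sub2r // (leq_ltn_trans ki ij).
  split; first exact: homo_ltn ltn_trans psi_incr _ _ ijk.
  by rewrite !M_E; apply: embeds_cons => //; apply: psiR.
have g_prefix i : i < k -> g i = M i by move=> ik; rewrite /g ik.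
have := Mmin k g gbad g_prefix.
by rewrite /g ltnn subnn M_E /= ltnn.
Qed.

Lemma embeds_nth T (R : T -> T -> Prop) d s t : embeds R s t ->
  exists phi : nat -> nat,
    (forall k, k < size s -> phi k < size t /\ R (nth d s k) (nth d t (phi k))) /\
    {in [pred k | k < size s] &, injective phi}.
Proof.
elim=> {s t} [t|b s t _ [phi [phiR phi_inj]]|a b s t ab _ [phi [phiR phi_inj]]].
- by exists id; split.
- exists (fun k => (phi k).+1); split=> [k /phiR [] //|k k' ks k's [/phi_inj]]; exact.
- exists (fun k => if k is k'.+1 then (phi k').+1 else 0); split=> [[|k] //= /phiR []//|].
  by move=> [|k] [|k'] //= ks k's [/phi_inj ->].
Qed.

Section Conformal.
Local Open Scope ring_scope.

Definition conformz (x y : int) : Prop := (0 <= x /\ x <= y) \/ (y <= x /\ x <= 0).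

Lemma conformz_refl x : conformz x x.
Proof. rewrite /conformz; lia. Qed.

Lemma conformz_trans y x z : conformz x y -> conformz y z -> conformz x z.
Proof. rewrite /conformz; lia. Qed.

Lemma wqo_conformz : wqo conformz.
Proof.
pose pos (x : int) := absz (Num.max x 0); pose neg (x : int) := absz (Num.max (- x) 0).
apply: (@sub_wqo _ (fun x y => (pos x <= pos y)%N /\ (neg x <= neg y)%N)).
  by rewrite /pos /neg /conformz => x y; lia.
apply: wqo_and; [move=> ? ? ?; exact: leq_trans | exact: wqo_comap wqo_leq |].
exact: wqo_comap wqo_leq.
Qed.

End Conformal.

Definition conformc {c} (a b : 'I_c -> int) : Prop := forall j, conformz (a j) (b j).

Lemma conformc_trans c (b a d : 'I_c -> int) : conformc a b -> conformc b d -> conformc a d.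
Proof. by move=> ab bd j; apply: conformz_trans (ab j) (bd j). Qed.

Lemma wqo_conformc c : wqo (@conformc c).
Proof.
suff wqo_on (s : seq 'I_c) : wqo (fun a b => forall j, j \in s -> conformz (a j) (b j)).
  by apply: sub_wqo (wqo_on (enum 'I_c)) => a b ab j; apply: ab; rewrite mem_enum.
elim: s => [|j s IH]; first by move=> f; exists 0%N, 1%N.
apply: (@sub_wqo _
  (fun a b => conformz (a j) (b j) /\ forall j, j \in s -> conformz (a j) (b j))).
  by move=> a b [abj abs] i; rewrite inE => /orP [/eqP->|/abs].
by apply: wqo_and IH; [move=> ? ? ?; exact: conformz_trans | exact: wqo_comap wqo_conformz].
Qed.

Definition transp (a b x : nat) : nat := if x == a then b else if x == b then a else x.

Lemma transpK a b : involutive (transp a b).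
Proof.
move=> x; rewrite /transp.
case: (eqVneq x a) => [->|xa]; first by rewrite eqxx; case: eqVneq.
case: (eqVneq x b) => [->|xb]; first by rewrite eqxx.
by rewrite (negbTE xa) (negbTE xb).
Qed.

Lemma finperm_transp a b : finperm (transp a b).
Proof.
split; first exact: inv_bij (transpK a b).
by exists (maxn a b).+1 => i ab_i; rewrite /transp ifN_eq ?ifN_eq //; apply/eqP; lia.
Qed.

Lemma finperm_comp s t : finperm s -> finperm t -> finperm (t \o s).
Proof.
move=> [s_bij [N sN]] [t_bij [M tM]]; split; first exact: bij_comp.
by exists (maxn N M) => i Ni /=; rewrite sN ?tM //; lia.
Qed.

Lemma finperm_extend n (phi : nat -> nat) :
  {in [pred k | k < n] &, injective phi} ->
  exists2 s, finperm s & forall k, k < n -> s k = phi k.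
Proof.
elim: n => [|n IH] phi_inj.
  by exists id => //; split; [exists id | exists 0].
have [k k' kn k'n|s s_perm s_phi] := IH; first by apply: phi_inj; rewrite inE ltnW.
exists (transp (s n) (phi n) \o s); first exact: finperm_comp (finperm_transp _ _).
move=> k; rewrite ltnS leq_eqVlt => /orP [/eqP->|kn] /=; first by rewrite /transp eqxx.
have [[s' sK _] _] := s_perm.
have phik_sn : phi k != s n.
  by apply/eqP => /(congr1 s'); rewrite -s_phi // !sK => /eqP; rewrite ltn_eqF.
have phik_phin : phi k != phi n.
  apply/eqP => /phi_inj; rewrite !inE ltnS ltnW // => /(_ isT (leqnn n)) /eqP.
  by rewrite ltn_eqF.
by rewrite (s_phi k kn) /transp (negbTE phik_sn) (negbTE phik_phin).
Qed.

Lemma ltn_sum (I : finType) (E1 E2 : I -> nat) i0 :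
  (forall i, E1 i <= E2 i) -> E1 i0 < E2 i0 -> \sum_i E1 i < \sum_i E2 i.
Proof.
move=> le12 lt12; rewrite (bigD1 i0) //= [X in _ < X](bigD1 i0) //= -addSn.
by apply: leq_add => //; apply: leq_sum.
Qed.

Section Vectors.
Local Open Scope ring_scope.
Variable c : nat.
Implicit Types (g h u v w x y : vec c).

Lemma vec_ext x y : (forall i j, x i j = y i j) -> x = y.
Proof.
move=> xy; apply: functional_extensionality => i.
by apply: functional_extensionality => j; apply: xy.
Qed.

Lemma vec_neqP x y : x <> y -> exists i j, x i j <> y i j.
Proof.
move=> xNy; apply: NNPP => xEy; apply: xNy; apply: vec_ext => i j.
by apply: NNPP => xij; apply: xEy; exists i, j.
Qed.

Definition supp_below (N : nat) x := forall i j, (N <= i)%N -> x i j = 0.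

Lemma finsupp_map (f : int -> int) x : f 0 = 0 -> finsupp x ->
  finsupp (fun i j => f (x i j) : int).
Proof. by move=> f0 [N xN]; exists N => i j Ni; rewrite xN. Qed.

Lemma finsupp_map2 (f : int -> int -> int) x y : f 0 0 = 0 -> finsupp x -> finsupp y ->
  finsupp (fun i j => f (x i j) (y i j) : int).
Proof. by move=> f0 [N xN] [M yM]; exists (maxn N M) => i j NMi; rewrite xN ?yM //; lia. Qed.

Definition conformal h x := forall i j, conformz (h i j) (x i j).

Lemma conformal_refl x : conformal x x.
Proof. by move=> i j; apply: conformz_refl. Qed.

Lemma conformal_trans y x z : conformal x y -> conformal y z -> conformal x z.
Proof. by move=> xy yz i j; apply: conformz_trans (xy i j) (yz i j). Qed.

Lemma conformal_subl g x : conformal g x -> conformal (vsub x g) x.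
Proof. by move=> gx i j; move: (gx i j); rewrite /vsub /conformz; lia. Qed.

Lemma conformal_supp_below N h x : supp_below N x -> conformal h x -> supp_below N h.
Proof. by move=> xN hx i j Ni; move: (hx i j); rewrite xN // /conformz; lia. Qed.

Definition norm (N : nat) x := (\sum_(p : 'I_N * 'I_c) absz (x p.1 p.2))%N.

Lemma norm_conformal_lt N h x : supp_below N x -> conformal h x -> h <> x ->
  (norm N h < norm N x)%N.
Proof.
move=> xN hx /vec_neqP [i [j hij]].
have iN : (i < N)%N.
  by rewrite ltnNge; apply/negP => Ni; apply: hij; rewrite xN // (conformal_supp_below xN hx).
apply: (ltn_sum (i0 := (Ordinal iN, j))) => [[a b]|] /=.
  by move: (hx a b); rewrite /conformz; lia.
by move: (hx i j) hij; rewrite /conformz; lia.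
Qed.

Lemma vsub_vsubK v g : vsub v (vsub v g) = g.
Proof. by apply: vec_ext => i j; rewrite /vsub; lia. Qed.

Definition vpos x : vec c := fun i j => Num.max (x i j) 0.
Definition vneg x : vec c := fun i j => Num.max (- x i j) 0.

Lemma nonneg_vpos x : finsupp x -> nonnegvec (vpos x).
Proof.
move=> x_fin; split=> [|i j]; last by rewrite /vpos; lia.
by apply: (finsupp_map (f := fun a => Num.max a 0)) x_fin; lia.
Qed.

Lemma nonneg_vneg x : finsupp x -> nonnegvec (vneg x).
Proof.
move=> x_fin; split=> [|i j]; last by rewrite /vneg; lia.
by apply: (finsupp_map (f := fun a => Num.max (- a) 0)) x_fin; lia.
Qed.

Lemma nonneg_vadd x y : nonnegvec x -> nonnegvec y -> nonnegvec (vadd x y).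
Proof.
move=> [x_fin x_ge0] [y_fin y_ge0]; split; first exact: (finsupp_map2 (f := +%R)).
by move=> i j; move: (x_ge0 i j) (y_ge0 i j); rewrite /vadd; lia.
Qed.

Lemma vaddC x y : vadd x y = vadd y x.
Proof. by apply: vec_ext => i j; rewrite /vadd addrC. Qed.

Lemma vpos_conformal_sub g x : conformal g x -> vpos x = vadd (vpos (vsub x g)) (vpos g).
Proof.
move=> gx; apply: vec_ext => i j.
by move: (gx i j); rewrite /vpos /vadd /vsub /conformz; lia.
Qed.

Lemma vneg_conformal_sub g x : conformal g x -> vneg x = vadd (vneg (vsub x g)) (vneg g).
Proof.
move=> gx; apply: vec_ext => i j.
by move: (gx i j); rewrite /vneg /vadd /vsub /conformz; lia.
Qed.

Definition vmin v w : vec c := fun i j => Num.min (v i j) (w i j).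

Lemma nonneg_vmin v w : nonnegvec v -> nonnegvec w -> nonnegvec (vmin v w).
Proof.
move=> [v_fin v_ge0] [w_fin w_ge0]; split; first exact: (finsupp_map2 (f := Num.min)).
by move=> i j; move: (v_ge0 i j) (w_ge0 i j); rewrite /vmin; lia.
Qed.

Lemma vpos_vmin v w : v = vadd (vpos (vsub v w)) (vmin v w).
Proof. by apply: vec_ext => i j; rewrite /vadd /vpos /vmin /vsub; lia. Qed.

Lemma vneg_vmin v w : w = vadd (vneg (vsub v w)) (vmin v w).
Proof. by apply: vec_ext => i j; rewrite /vadd /vneg /vmin /vsub; lia. Qed.

End Vectors.

Section TermOrder.
Variables (c : nat) (prec : vec c -> vec c -> Prop).
Hypothesis prec_order : term_order prec.

Definition preceq u v := prec u v \/ u = v.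

Lemma prec_irrefl u : nonnegvec u -> ~ prec u u.
Proof. by case: prec_order => irr _; apply: irr. Qed.

Lemma prec_trans u v w : nonnegvec u -> nonnegvec v -> nonnegvec w ->
  prec u v -> prec v w -> prec u w.
Proof. by case: prec_order => _ [tr _]; apply: tr. Qed.

Lemma prec_addr u v w : nonnegvec u -> nonnegvec v -> nonnegvec w ->
  prec u v -> prec (vadd u w) (vadd v w).
Proof. by case: prec_order => _ [_ [_ [add _]]]; apply: add. Qed.

Lemma preceqNprec u v : nonnegvec u -> nonnegvec v -> ~ prec u v -> preceq v u.
Proof.
case: prec_order => _ [_ [tot _]] nu nv uv.
by case: (tot u v nu nv) => [//|[->|vu]]; [right | left].
Qed.

Lemma prec_preceq_false u v : nonnegvec u -> nonnegvec v -> prec u v -> preceq v u -> False.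
Proof.
move=> nu nv uv [vu|vu]; first exact: prec_irrefl nu (prec_trans nu nv nu uv vu).
by move: uv; rewrite vu; apply: prec_irrefl.
Qed.

Lemma preceq_add u v w z : nonnegvec u -> nonnegvec v -> nonnegvec w -> nonnegvec z ->
  preceq u v -> preceq w z -> preceq (vadd u w) (vadd v z).
Proof.
move=> nu nv nw nz uv wz.
have uwvw : preceq (vadd u w) (vadd v w).
  by case: uv => [uv|->]; [left; apply: prec_addr | right].
have vwvz : preceq (vadd v w) (vadd v z).
  by rewrite ![vadd v _]vaddC; case: wz => [wz|->]; [left; apply: prec_addr | right].
case: uwvw vwvz => [lt1 [lt2|<-]|-> //]; last by left.
by left; apply: prec_trans lt1 lt2; apply: nonneg_vadd.
Qed.

Lemma term_order_ind (P : vec c -> Prop) :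
  (forall v, nonnegvec v -> (forall w, nonnegvec w -> prec w v -> P w) -> P v) ->
  forall v, nonnegvec v -> P v.
Proof.
case: prec_order => _ [_ [_ [_ wf]]] step v nv; apply: NNPP => Pv.
have [m [[nm Pm] m_min]] :=
  wf (fun v => nonnegvec v /\ ~ P v) (fun _ => @proj1 _ _) (ex_intro _ v (conj nv Pv)).
apply: Pm; apply: step => // w nw wm; apply: NNPP => Pw.
exact: m_min w (conj nw Pw) wm.
Qed.

Lemma prec_vsub_parts v w : nonnegvec v -> nonnegvec w ->
  prec w v <-> prec (vneg (vsub v w)) (vpos (vsub v w)).
Proof.
move=> nv nw; have [v_fin _] := nv; have [w_fin _] := nw.
have vw_fin : finsupp (vsub v w) by exact: (finsupp_map2 (f := fun a b : int => (a - b)%R)).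
have nr := nonneg_vmin nv nw.
split=> [wv|].
  apply: NNPP => /(preceqNprec (nonneg_vneg vw_fin) (nonneg_vpos vw_fin)) pn.
  apply: prec_preceq_false nw nv wv _.
  rewrite [X in preceq X](vpos_vmin v w) [X in preceq _ X](vneg_vmin v w).
  by apply: preceq_add => //; [apply: nonneg_vpos | apply: nonneg_vneg | right].
move=> /(prec_addr (nonneg_vneg vw_fin) (nonneg_vpos vw_fin) nr).
by rewrite -vneg_vmin -vpos_vmin.
Qed.

End TermOrder.

Section Graver.
Local Open Scope ring_scope.
Variables (c : nat) (L : vec c -> Prop).
Hypothesis L_lattice : lattice L.
Implicit Types (g h u v w x y : vec c).

Lemma lattice_finsupp x : L x -> finsupp x.
Proof. by case: L_lattice => fin _; apply: fin. Qed.

Lemma lattice0 : L (vzero c).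
Proof. by case: L_lattice => _ []. Qed.

Lemma lattice_sub x y : L x -> L y -> L (vsub x y).
Proof. by case: L_lattice => _ [_]; apply. Qed.

Lemma lattice_add x y : L x -> L y -> L (vadd x y).
Proof.
move=> Lx Ly; suff -> : vadd x y = vsub x (vsub (vzero c) y).
  by apply/lattice_sub/lattice_sub/Ly/lattice0.
by apply: vec_ext => i j; rewrite /vadd /vsub /vzero; lia.
Qed.

Definition graver g :=
  L g /\ g <> vzero c /\ forall h, L h -> h <> vzero c -> conformal h g -> h = g.

Lemma graver_below x : L x -> x <> vzero c -> exists2 g, graver g & conformal g x.
Proof.
move=> Lx; have [N xN] := lattice_finsupp Lx.
have [k] := ubnP (norm N x); elim: k x Lx xN => // k IH x Lx xN /ltnSE normx x0.
case: (classic (graver x)) => [gx|ngx]; first by exists x => //; apply: conformal_refl.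
have [h [Lh [h0 [hx hNx]]]] : exists h, L h /\ h <> vzero c /\ conformal h x /\ h <> x.
  apply: NNPP => noh; apply: ngx; split=> //; split=> // h Lh h0 hx.
  by apply: NNPP => hNx; apply: noh; exists h.
have hN := conformal_supp_below xN hx.
have [g gg gh] := IH h Lh hN (leq_trans (norm_conformal_lt xN hx hNx) normx) h0.
by exists g => //; apply: conformal_trans gh hx.
Qed.

Lemma graver_ind (P : vec c -> Prop) : P (vzero c) ->
  (forall x g, L x -> graver g -> conformal g x -> P (vsub x g) -> P x) ->
  forall x, L x -> P x.
Proof.
move=> P0 Pstep x Lx; have [N xN] := lattice_finsupp Lx.
have [k] := ubnP (norm N x); elim: k x Lx xN => // k IH x Lx xN /ltnSE normx.
case: (classic (x = vzero c)) => [->|x0] //.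
have [g gg gx] := graver_below Lx x0; have [Lg [g0 _]] := gg.
apply: (Pstep _ _ Lx gg gx (IH _ (lattice_sub Lx Lg) _ _)).
  exact: conformal_supp_below xN (conformal_subl gx).
apply: leq_trans normx; apply: norm_conformal_lt xN (conformal_subl gx) _.
move=> xgx; apply: g0; apply: vec_ext => i j.
by move: (congr1 (fun v => v i j) xgx); rewrite /vsub /vzero; lia.
Qed.

Lemma graver_leading_below prec : term_order prec -> forall x, L x ->
  prec (vneg x) (vpos x) -> exists2 g, graver g & conformal g x /\ prec (vneg g) (vpos g).
Proof.
move=> prec_order; apply: graver_ind => [|x g Lx gg gx IH].
  have -> : vneg (vzero c) = vpos (vzero c).
    by apply: vec_ext => i j; rewrite /vneg /vpos /vzero; lia.
  by move=> /(prec_irrefl prec_order (nonneg_vpos (lattice_finsupp lattice0))).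
move=> x_lead.
have [x_fin g_fin] := (lattice_finsupp Lx, lattice_finsupp gg.1).
have xg_fin := lattice_finsupp (lattice_sub Lx gg.1).
case: (classic (prec (vneg g) (vpos g))) => [g_lead|gNlead]; first by exists g.
case: (classic (prec (vneg (vsub x g)) (vpos (vsub x g)))) => [|xgNlead].
  move=> /IH [h hg [hxg h_lead]].
  by exists h => //; split=> //; apply: conformal_trans hxg (conformal_subl gx).
exfalso; apply: (prec_preceq_false prec_order (nonneg_vneg x_fin) (nonneg_vpos x_fin) x_lead).
rewrite (vpos_conformal_sub gx) (vneg_conformal_sub gx).
by apply: (preceq_add prec_order);
  do ?[exact: nonneg_vpos | exact: nonneg_vneg | apply: (preceqNprec prec_order)].
Qed.

Lemma fiber_vsub u v w g : fiber L u v -> nonnegvec w -> L g -> conformal g (vsub v w) ->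
  fiber L u (vsub v g).
Proof.
move=> [[v_fin v_ge0] Luv] [_ w_ge0] Lg gvw; split; first split.
- exact: (finsupp_map2 (f := fun a b : int => a - b)) v_fin (lattice_finsupp Lg).
- by move=> i j; move: (gvw i j) (v_ge0 i j) (w_ge0 i j); rewrite /vsub /conformz; lia.
suff -> : vsub u (vsub v g) = vadd (vsub u v) g by apply: lattice_add.
by apply: vec_ext => i j; rewrite /vsub /vadd; lia.
Qed.

Hypothesis L_sym : sym_invariant L.

Definition orbit g h := exists s, finperm s /\ act_rel s g h.
Definition columns (N : nat) x : seq ('I_c -> int) := mkseq x N.

Lemma conformal_image_of_embeds (N M : nat) g h : supp_below N g ->
  embeds conformc (columns N g) (columns M h) ->
  exists s w, [/\ finperm s, act_rel s g w & conformal w h].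
Proof.
move=> gN /(embeds_nth (fun _ => 0)); rewrite !size_mkseq => -[phi [phiE phi_inj]].
have [s s_perm s_phi] := finperm_extend phi_inj.
have [[s' sK s'K] _] := s_perm.
exists s, (fun p => g (s' p)); split=> // [i j|p j]; first by rewrite sK.
case: (ltnP (s' p) N) => [s'pN|Ns'p]; last by rewrite gN // /conformz; lia.
have [phiM] := phiE _ s'pN; rewrite !nth_mkseq // -s_phi // s'K; apply.
Qed.

Lemma graver_orbit_of_embeds (N M : nat) g h : graver g -> graver h -> supp_below N g ->
  embeds conformc (columns N g) (columns M h) -> orbit g h.
Proof.
move=> [Lg [g0 _]] [_ [_ h_min]] gN /(conformal_image_of_embeds gN) [s [w [s_perm gw wh]]].
exists s; split=> //; rewrite -(h_min w (L_sym s_perm Lg gw)) //.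
move=> w0; apply: g0; apply: vec_ext => i j; by rewrite -gw w0.
Qed.

Lemma graver_seq_new_orbits :
  ~ (exists n (B : 'I_n -> vec c), (forall k, L (B k)) /\ forall g, graver g -> SymOrbit B g) ->
  exists G : nat -> vec c, forall n, graver (G n) /\ forall i, (i < n)%N -> ~ orbit (G i) (G n).
Proof.
move=> infinite.
pose all_graver (s : seq (vec c)) := forall i, (i < size s)%N -> graver (nth (vzero c) s i).
have [G G_new] : exists G : nat -> vec c, forall n, all_graver (mkseq G n) -> graver (G n) /\
    forall i, (i < size (mkseq G n))%N -> ~ orbit (nth (vzero c) (mkseq G n) i) (G n).
  apply: (dependent_choice_seq (P := fun s x => all_graver s -> graver x /\
    forall i, (i < size s)%N -> ~ orbit (nth (vzero c) s i) x)) => s.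
  case: (classic (all_graver s)) => [s_graver|]; last by exists (vzero c).
  apply: NNPP => no_new; apply: infinite.
  exists (size s), (fun k : 'I_(size s) => nth (vzero c) s k); split=> [k|g gg].
    exact: (s_graver k (ltn_ord k)).1.
  apply: NNPP => g_new; apply: no_new; exists g => _; split=> // i si [t [t_perm tg]].
  by apply: g_new; exists t, (Ordinal si).
have G_graver n : all_graver (mkseq G n).
  elim/ltn_ind: n => n IH i; rewrite size_mkseq => ni; rewrite nth_mkseq //.
  by apply: (G_new i (IH i ni)).1.
exists G => n; have [Gn G_orb] := G_new n (G_graver n); split=> // i ni.
by have := G_orb i; rewrite size_mkseq nth_mkseq //; apply.
Qed.

Lemma graver_orbits_finite : exists n (B : 'I_n -> vec c),
  (forall k, L (B k)) /\ forall g, graver g -> SymOrbit B g.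
Proof.
apply: NNPP => /graver_seq_new_orbits [G G_new].
have /choice [N GN] : forall n, exists N, supp_below N (G n).
  by move=> n; apply: lattice_finsupp; case: (G_new n).1.
have [i [j [ij Eij]]] :=
  higman (@conformc_trans c) (@wqo_conformc c) (fun n => columns (N n) (G n)).
apply: ((G_new j).2 i ij); apply: graver_orbit_of_embeds Eij => //.
- by case: (G_new i).
- by case: (G_new j).
Qed.

Section Bases.
Variables (n : nat) (B : 'I_n -> vec c).
Hypothesis B_lattice : forall k, L (B k).
Hypothesis graver_orbits : forall g, graver g -> SymOrbit B g.

Lemma SymOrbit_lattice b : SymOrbit B b -> L b.
Proof. by move=> [s [k [s_perm sb]]]; apply: L_sym s_perm (B_lattice k) sb. Qed.

Lemma generating_set_of_graver : generating_set L (SymOrbit B).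
Proof.
split=> [|x]; first exact: SymOrbit_lattice.
apply: graver_ind => [|{}x g _ /graver_orbits Bg _ IH]; first exact: gen0.
suff -> : x = vsub (vsub x g) (vsub (vzero c) g) by apply/genS/genS/genB/Bg/gen0/IH.
by apply: vec_ext => i j; rewrite /vsub /vzero; lia.
Qed.

Lemma edge_vsub_graver u v g : fiber L u v -> fiber L u (vsub v g) -> graver g ->
  edge L (SymOrbit B) u v (vsub v g).
Proof. by move=> Fv Fvg /graver_orbits Bg; do 2 split=> //; left; rewrite vsub_vsubK. Qed.

Lemma markov_basis_of_graver : markov_basis L (SymOrbit B).
Proof.
split=> [|u _ v w Fv Fw]; first exact: SymOrbit_lattice.
have Lvw : L (vsub v w).
  suff -> : vsub v w = vsub (vsub u w) (vsub u v) by apply: lattice_sub; [case: Fw | case: Fv].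
  by apply: vec_ext => i j; rewrite /vsub; lia.
suff: forall x, L x -> forall y, fiber L u y -> vsub y w = x ->
    clos_refl_trans (vec c) (edge L (SymOrbit B) u) y w by move/(_ _ Lvw v Fv); apply.
apply: graver_ind => [|x g _ gg gx IH] y Fy ywx.
  suff -> : y = w by apply: rt_refl.
  by apply: vec_ext => i j; move: (congr1 (fun z => z i j) ywx); rewrite /vsub /vzero; lia.
have gyw : conformal g (vsub y w) by rewrite ywx.
have Fyg := fiber_vsub Fy Fw.1 gg.1 gyw.
apply: rt_trans (rt_step _ _ _ _ (edge_vsub_graver Fy Fyg gg)) (IH _ Fyg _).
by apply: vec_ext => i j; rewrite -ywx /vsub; lia.
Qed.

Lemma groebner_basis_of_graver prec : term_order prec -> groebner_basis L (SymOrbit B) prec.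
Proof.
move=> prec_order; split=> [|u nu m Fm m_min]; first exact: SymOrbit_lattice.
have nm := Fm.1.
suff: forall v, nonnegvec v -> fiber L u v ->
    clos_refl_trans (vec c) (dedge L (SymOrbit B) prec u) v m.
  apply=> //; split=> //; suff -> : vsub u u = vzero c by apply: lattice0.
  by apply: vec_ext => i j; rewrite /vsub /vzero; lia.
apply: (term_order_ind prec_order) => v nv IH Fv.
case: (classic (v = m)) => [->|vNm]; first exact: rt_refl.
have mv : prec m v.
  by case: (preceqNprec prec_order nv nm (m_min v Fv)) => // vm; case: vNm.
have Lvm : L (vsub v m).
  suff -> : vsub v m = vsub (vsub u m) (vsub u v) by apply: lattice_sub; [case: Fm | case: Fv].
  by apply: vec_ext => i j; rewrite /vsub; lia.
have [g gg [gvm g_lead]] :=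
  graver_leading_below prec_order Lvm ((prec_vsub_parts prec_order nv nm).1 mv).
have Fvg := fiber_vsub Fv nm gg.1 gvm.
have vg_v : prec (vsub v g) v.
  by apply/(prec_vsub_parts prec_order nv Fvg.1); rewrite vsub_vsubK.
apply: rt_trans (IH _ Fvg.1 vg_v Fvg).
exact: rt_step (conj (edge_vsub_graver Fv Fvg gg) vg_v).
Qed.
End Bases.
End Graver.

Theorem corollary4p3 (c : nat) (hc : (0 < c)%N) (L : vec c -> Prop) :
  lattice L -> sym_invariant L ->
  (exists (n : nat) (B : 'I_n -> vec c), universal_groebner_basis L (SymOrbit B)) /\
  (forall prec : vec c -> vec c -> Prop, term_order prec ->
     exists (n : nat) (B : 'I_n -> vec c), groebner_basis L (SymOrbit B) prec) /\
  (exists (n : nat) (B : 'I_n -> vec c), markov_basis L (SymOrbit B)) /\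
  (exists (n : nat) (B : 'I_n -> vec c), generating_set L (SymOrbit B)).
Proof.
move=> L_lattice L_sym.
have [n [B [B_lattice graver_orbits]]] := graver_orbits_finite L_lattice L_sym.
have groebner := groebner_basis_of_graver L_lattice L_sym B_lattice graver_orbits.
split; first by exists n, B => prec; apply: groebner.
split; first by move=> prec prec_order; exists n, B; apply: groebner.
split; exists n, B.
  exact: (markov_basis_of_graver L_lattice L_sym B_lattice graver_orbits).
exact: (generating_set_of_graver L_lattice L_sym B_lattice graver_orbits).
Qed.
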